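(* Let the sequence $r$ on positive integers be defined by $r(1)=0$, $r(k)=\frac{3k}{2}+r(\frac{k}{2})$ if $k$ is even, and $r(k)=2+\frac{3(k-1)}{2}+r(\frac{k+1}{2})$ if $k\neq1$ is odd. Then for every positive integer $k$, $$r(k)\leq 3\left(2^{\lceil\log_2k\rceil}-1\right)<6k-3.$$ *)

From mathcomp Require Import all_boot.

From mathcomp Require Import all_boot.
From mathcomp Require Import zify.

(* Induction on e: if k <= 2^(e+1) then its "half" (k/2 or (k+1)/2) is at most
   2^e, and the cost 3k/2 (+ 2 for odd k) added by one halving step is at most
   3 * 2^e, since an odd k > 1 is strictly below 2^(e+1).  Taking e = ceil(log2 k)
   gives the first bound, and 2^ceil(log2 k) < 2k gives the second. *)

Lemma expn_up_log2_lt_double k : 0 < k -> 2 ^ up_log 2 k < k.*2.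
Proof.
move=> k_gt0; have [-> | k_neq1] := eqVneq k 1; first by rewrite up_log1.
have k_gt1 : 1 < k by lia.
have := up_log_gtn (isT : 1 < 2) k_gt1.
have : 0 < up_log 2 k by rewrite up_log_gt0 k_gt1.
by case: (up_log 2 k) => [|e] //= _; rewrite expnS; lia.
Qed.

Section HalvingRecurrence.

Variable r : nat -> nat.
Hypothesis r1 : r 1 = 0.
Hypothesis reven : forall k, 0 < k -> ~~ odd k -> r k = (3 * k) %/ 2 + r (k %/ 2).
Hypothesis rodd :
  forall k, 1 < k -> odd k -> r k = 2 + (3 * (k - 1)) %/ 2 + r ((k + 1) %/ 2).

Lemma r_double m : 0 < m -> r m.*2 = 3 * m + r m.
Proof.
move=> m_gt0; rewrite reven ?odd_double ?double_gt0 //.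
by rewrite !divn2 -doubleMr !doubleK.
Qed.

Lemma r_double_succ m : 0 < m -> r m.*2.+1 = 2 + 3 * m + r m.+1.
Proof.
move=> m_gt0; rewrite rodd /= ?odd_double ?ltnS ?double_gt0 //.
by rewrite subn1 succnK addn1 -doubleS !divn2 -doubleMr !doubleK.
Qed.

Lemma r_le_expn2 e k : 0 < k -> k <= 2 ^ e -> r k <= 3 * (2 ^ e - 1).
Proof.
elim: e k => [|e IHe] k k_gt0 k_le.
  rewrite expn0 in k_le; have -> : k = 1 by lia.
  by rewrite r1.
have [-> | k_neq1] := eqVneq k 1; first by rewrite r1.
have pow_gt0 : 0 < 2 ^ e by rewrite expn_gt0.
rewrite expnS in k_le *.
rewrite -(odd_double_half k) in k_gt0 k_neq1 k_le *.
have half_gt0 : 0 < k./2 by case: (odd k) k_gt0 k_neq1 k_le; lia.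
case: (odd k) k_le => /= k_le.
- have := IHe k./2.+1 isT; rewrite r_double_succ //; lia.
- have := IHe k./2 half_gt0; rewrite add0n r_double //; lia.
Qed.

End HalvingRecurrence.

Theorem lemma6 (r : nat -> nat)
  (r1 : r 1 = 0)
  (reven : forall k, 0 < k -> ~~ odd k -> r k = (3 * k) %/ 2 + r (k %/ 2))
  (rodd : forall k, 1 < k -> odd k -> r k = 2 + (3 * (k - 1)) %/ 2 + r ((k + 1) %/ 2))
  (k : nat) : 0 < k ->
  r k <= 3 * (2 ^ up_log 2 k - 1) /\ 3 * (2 ^ up_log 2 k - 1) < 6 * k - 3.
Proof.
move=> k_gt0; split.
  exact: r_le_expn2 r1 reven rodd _ _ k_gt0 (up_logP k (isT : 1 < 2)).
have := expn_up_log2_lt_double _ k_gt0.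
have : 0 < 2 ^ up_log 2 k by rewrite expn_gt0.
lia.
Qed.
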